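(* Let $d$ be a positive square-free integer with $d\equiv 7\pmod 8$, let $K=\mathbb{Q}[\sqrt{-d}]$ with ring of integers $\mathfrak{o}_K$, and let $u=u_1+u_ii+u_jj+u_kk\in\mathcal{U}(\mathbb{H}(\mathfrak{o}_K))$. Then: (1) $u^2=2u_1u-N(u)$; (2) if $N(u)=1$, then $u$ is a torsion unit if and only if $u_1\in\{-1,0,1\}$ and the order of $u$ is $1$, $2$ or $4$; (3) if $N(u)=-1$, then $u$ has infinite order.
   Context: $\mathbb{H}(K)=\left(\frac{-1,-1}{K}\right)$ is the quaternion algebra over $K$ with $K$-basis $1,i,j,k$, $i^2=j^2=-1$, $k=ji=-ij$; $\mathbb{H}(\mathfrak{o}_K)$ is the set of $\mathfrak{o}_K$-linear combinations of $1,i,j,k$. The norm is $N(x_1+x_ii+x_jj+x_kk)=x_1^2+x_i^2+x_j^2+x_k^2$. *)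

From HB Require Import structures.
From mathcomp Require Import all_boot all_order all_algebra all_field.
From mathcomp Require Import algC algnum.
Set Implicit Arguments. Unset Strict Implicit. Unset Printing Implicit Defensive.
Import Order.TTheory GRing.Theory Num.Theory.
Local Open Scope ring_scope.

Definition squarefree_nat (d : nat) : Prop :=
  forall p : nat, prime p -> ~~ (p * p %| d)%N.

Definition sqrt_negd (d : nat) : algC := sqrtC (- (d%:R)).

Definition inK (d : nat) (x : algC) : Prop :=
  exists a b : rat, x = ratr a + ratr b * sqrt_negd d.

Definition inOK (d : nat) (x : algC) : Prop := inK d x /\ x \in Aint.

Record quat := Quat { q1 : algC; qi : algC; qj : algC; qk : algC }.

(* multiplication with i^2 = j^2 = -1, k = ji = -ij
   (hence jk = -i, kj = i, ki = -j, ik = j, k^2 = -1) *)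
Definition qmul (a b : quat) : quat :=
  Quat (q1 a * q1 b - qi a * qi b - qj a * qj b - qk a * qk b)
       (q1 a * qi b + qi a * q1 b - qj a * qk b + qk a * qj b)
       (q1 a * qj b + qj a * q1 b + qi a * qk b - qk a * qi b)
       (q1 a * qk b + qk a * q1 b - qi a * qj b + qj a * qi b).

Definition qadd (a b : quat) : quat :=
  Quat (q1 a + q1 b) (qi a + qi b) (qj a + qj b) (qk a + qk b).
Definition qscale (c : algC) (a : quat) : quat :=
  Quat (c * q1 a) (c * qi a) (c * qj a) (c * qk a).
Definition qconst (c : algC) : quat := Quat c 0 0 0.
Definition qone : quat := qconst 1.
Definition qsub (a b : quat) : quat := qadd a (qscale (-1) b).

Fixpoint qpow (a : quat) (n : nat) : quat :=
  match n with 0%N => qone | n'.+1 => qmul (qpow a n') a end.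

Definition qnorm (a : quat) : algC :=
  q1 a ^+ 2 + qi a ^+ 2 + qj a ^+ 2 + qk a ^+ 2.

Definition inHOK (d : nat) (a : quat) : Prop :=
  inOK d (q1 a) /\ inOK d (qi a) /\ inOK d (qj a) /\ inOK d (qk a).

Definition unitHOK (d : nat) (a : quat) : Prop :=
  inHOK d a /\ exists b, inHOK d b /\ qmul a b = qone /\ qmul b a = qone.

Definition torsion (a : quat) : Prop := exists n : nat, (0 < n)%N /\ qpow a n = qone.

Definition has_order (a : quat) (n : nat) : Prop :=
  (0 < n)%N /\ qpow a n = qone /\
  forall m : nat, (0 < m)%N -> (m < n)%N -> qpow a m <> qone.

Definition infinite_order (a : quat) : Prop :=
  forall n : nat, (0 < n)%N -> qpow a n <> qone.

From mathcomp Require Import all_boot all_order all_algebra all_field.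
From mathcomp Require Import algC algnum.
From mathcomp Require Import zify ring.
Set Implicit Arguments. Unset Strict Implicit. Unset Printing Implicit Defensive.
Import Order.TTheory GRing.Theory Num.Theory.

(* If u^n = 1 and l is a root of X^2 - 2 u1 X + N(u), then l is an eigenvalue
   of left multiplication by u, with eigenvector u - (2 u1 - l); hence l^n = 1
   and |l| = 1.  For N(u) = 1 this gives u1 = Re l, a real algebraic integer of
   K of modulus at most 1, so u1 is -1, 0 or 1; for N(u) = -1 it gives
   u1 = i Im l, so u1^2 is an integer in [-1, 0].  The remaining cases are
   excluded, and u1 = +-1 forces u = +-1, because x1^2 + x2^2 + x3^2 + x4^2 is
   anisotropic over K: splitting into rational and sqrt(-d) parts reduces this
   to d not being a sum of three rational squares, which holds for
   d = 7 mod 8 by a 2-adic descent. *)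

Lemma sqrn_mod4 x : x * x = odd x %[mod 4].
Proof.
rewrite -[x in LHS]odd_double_half; set h := x./2.
by case: (odd x); rewrite -!muln2; lia.
Qed.

Lemma odd_sqrn_mod8 x : odd x -> x * x = 1 %[mod 8].
Proof.
move=> ox; rewrite -[x in LHS]odd_double_half ox; set h := x./2.
have [j hj] : exists j, h * h.+1 = j.*2.
  by exists (h * h.+1)./2; rewrite -[LHS]odd_double_half oddM oddS andbN.
rewrite -!muln2 in hj *; nia.
Qed.

Lemma sum3sqr_mod4_eq0 x y z :
  x * x + y * y + z * z = 0 %[mod 4] -> [&& ~~ odd x, ~~ odd y & ~~ odd z].
Proof.
move: (sqrn_mod4 x) (sqrn_mod4 y) (sqrn_mod4 z).
by case: (odd x) (odd y) (odd z) => [] [] [] /=; lia.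
Qed.

Lemma sum3sqr_mod8_neq7 x y z : x * x + y * y + z * z <> 7 %[mod 8].
Proof.
move=> h7; move: (sqrn_mod4 x) (sqrn_mod4 y) (sqrn_mod4 z).
case ox: (odd x); case oy: (odd y); case oz: (odd z) => /=; try lia.
move: (odd_sqrn_mod8 ox) (odd_sqrn_mod8 oy) (odd_sqrn_mod8 oz) h7.
by move: (x * x) (y * y) (z * z) => X Y Z; lia.
Qed.

Lemma sum3sqr_eq_mul_sqr d x y z w :
  d %% 8 = 7 -> x * x + y * y + z * z = d * (w * w) -> w = 0.
Proof.
move=> d7; elim: w {-2}w (leqnn w) x y z => [|n IH] w le_wn x y z E; first lia.
case ow: (odd w).
  by case: (@sum3sqr_mod8_neq7 x y z); move: (odd_sqrn_mod8 ow); rewrite E; nia.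
rewrite -[w]odd_double_half ow add0n -muln2 in E *.
have /and3P[ex ey ez] : [&& ~~ odd x, ~~ odd y & ~~ odd z] by apply: sum3sqr_mod4_eq0; nia.
rewrite -[x]odd_double_half -[y]odd_double_half -[z]odd_double_half
  (negbTE ex) (negbTE ey) (negbTE ez) -!muln2 in E.
suff -> : w./2 = 0 by [].
by apply: (IH _ _ x./2 y./2 z./2); lia.
Qed.

Local Open Scope ring_scope.

Lemma sum4sqr_eq0 (R : realDomainType) (x0 x1 x2 x3 : R) :
  x0 ^+ 2 + x1 ^+ 2 + x2 ^+ 2 + x3 ^+ 2 = 0 -> [/\ x0 = 0, x1 = 0, x2 = 0 & x3 = 0].
Proof.
move=> /eqP; rewrite !paddr_eq0 ?addr_ge0 ?sqr_ge0 // !sqrf_eq0.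
by case/andP => /andP [/andP [/eqP -> /eqP ->] /eqP ->] /eqP ->.
Qed.

Lemma sqrz (x : int) : x ^+ 2 = (`|x| * `|x|)%N%:Z.
Proof. by rewrite PoszM abszE -normrM -expr2 ger0_norm // sqr_ge0. Qed.

Lemma rat_scale_int (c : rat) (k : int) :
  (denq c %| k)%Z -> exists n : int, c * k%:~R = n%:~R.
Proof. by case/dvdzP=> j ->; exists (j * numq c); rewrite !intrM numqE mulrCA. Qed.

Section ThreeSquares.
Variables (d : nat) (d_mod8 : (d %% 8 = 7)%N).

Lemma sum3sqrz_eq_mul_sqr (x y z w : int) :
  x ^+ 2 + y ^+ 2 + z ^+ 2 = d%:Z * w ^+ 2 -> w = 0.
Proof.
rewrite !sqrz -!PoszD -PoszM => -[/(sum3sqr_eq_mul_sqr d_mod8) /eqP].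
by rewrite absz_eq0 => /eqP.
Qed.



Lemma sum3sqrq_eq_mul_sqr (c1 c2 c3 m : rat) :
  c1 ^+ 2 + c2 ^+ 2 + c3 ^+ 2 = d%:R * m ^+ 2 -> m = 0.
Proof.
move=> E; set D := denq c1 * denq c2 * denq c3 * denq m.
have [n1 h1] : exists n : int, c1 * D%:~R = n%:~R.
  by apply: rat_scale_int; rewrite /D !dvdz_mulr.
have [n2 h2] : exists n : int, c2 * D%:~R = n%:~R.
  by apply: rat_scale_int; rewrite /D dvdz_mulr // dvdz_mulr // dvdz_mull.
have [n3 h3] : exists n : int, c3 * D%:~R = n%:~R.
  by apply: rat_scale_int; rewrite /D dvdz_mulr // dvdz_mull.
have [n4 h4] : exists n : int, m * D%:~R = n%:~R.
  by apply: rat_scale_int; rewrite /D dvdz_mull.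
have /sum3sqrz_eq_mul_sqr n40 : n1 ^+ 2 + n2 ^+ 2 + n3 ^+ 2 = d%:Z * n4 ^+ 2.
  apply/eqP; rewrite -(eqr_int rat) !(rmorphXn, rmorphD) rmorphM rmorphXn /=.
  rewrite -h1 -h2 -h3 -h4.
  by rewrite !exprMn -!mulrDl E -mulrA.
move: h4; rewrite n40 => /eqP; rewrite mulf_eq0 intr_eq0 !mulf_eq0 !denq_eq0 /=.
by rewrite orbF => /eqP.
Qed.

Lemma orthogonal_sum4sqrq_eq0 (a0 a1 a2 a3 b0 b1 b2 b3 : rat) :
  a0 * b0 + a1 * b1 + a2 * b2 + a3 * b3 = 0 ->
  a0 ^+ 2 + a1 ^+ 2 + a2 ^+ 2 + a3 ^+ 2 = d%:R * (b0 ^+ 2 + b1 ^+ 2 + b2 ^+ 2 + b3 ^+ 2) ->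
  [/\ a0 = 0, a1 = 0, a2 = 0 & a3 = 0] /\ [/\ b0 = 0, b1 = 0, b2 = 0 & b3 = 0].
Proof.
set B := b0 ^+ 2 + b1 ^+ 2 + b2 ^+ 2 + b3 ^+ 2 => ab0 Eab.
(* |a|^2 |b|^2 - (a.b)^2 is a sum of three squares (quaternion norm identity). *)
have /sum3sqrq_eq_mul_sqr B0 : (a0 * b1 - a1 * b0 + a2 * b3 - a3 * b2) ^+ 2
    + (a0 * b2 - a1 * b3 - a2 * b0 + a3 * b1) ^+ 2
    + (a0 * b3 + a1 * b2 - a2 * b1 - a3 * b0) ^+ 2 = d%:R * B ^+ 2.
  transitivity ((a0 ^+ 2 + a1 ^+ 2 + a2 ^+ 2 + a3 ^+ 2) * B
                - (a0 * b0 + a1 * b1 + a2 * b2 + a3 * b3) ^+ 2); first by rewrite /B; ring.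
  by rewrite ab0 Eab; ring.
by split; apply: sum4sqr_eq0; rewrite ?Eab -/B B0 ?mulr0.
Qed.

End ThreeSquares.

Section QuadraticField.
Variables (d : nat) (d_gt0 : (0 < d)%N).
Local Notation s := (sqrt_negd d).

Lemma sqrt_negd_sqr : s ^+ 2 = - d%:R.
Proof. by rewrite /sqrt_negd sqrtCK. Qed.

Lemma sqrt_negd_nreal : s \isn't Num.real.
Proof.
rewrite realEsqr sqrt_negd_sqr le0r oppr_eq0 pnatr_eq0 oppr_gt0.
by rewrite negb_or -lt0n d_gt0 /= lt_gtF // ltr0n.
Qed.

Lemma ratr_mul_sqrt_negd_real (b : rat) : ratr b * s \is Num.real -> b = 0.
Proof.
move=> bs_real; apply/eqP; apply: contraT => nz_b; case/negP: sqrt_negd_nreal.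
have nz_rb : ratr b != 0 :> algC by rewrite fmorph_eq0.
by rewrite -(mulKf nz_rb s) rpredM // rpredV Creal_Crat ?Crat_rat.
Qed.

Lemma ratr_sqrt_negd_eq0 (a b : rat) : ratr a + ratr b * s = 0 -> a = 0 /\ b = 0.
Proof.
move=> /eqP; rewrite addrC addr_eq0 => /eqP bs.
have b0 : b = 0 by apply: ratr_mul_sqrt_negd_real; rewrite bs rpredN Creal_Crat ?Crat_rat.
by move: bs; rewrite b0 rmorph0 mul0r => /eqP; rewrite eq_sym oppr_eq0 fmorph_eq0 => /eqP.
Qed.

Lemma inK_real_Crat x : inK d x -> x \is Num.real -> x \in Crat.
Proof.
case=> a [b ->] x_real.
have b0 : b = 0.
  apply: ratr_mul_sqrt_negd_real.
  by rewrite -(addKr (ratr a) (ratr b * s)) rpredD // rpredN Creal_Crat ?Crat_rat.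
by rewrite b0 rmorph0 mul0r addr0 Crat_rat.
Qed.

Lemma inOK_real_int x : inOK d x -> x \is Num.real -> x \is a Num.int.
Proof. by case=> Kx Ax x_real; rewrite Cint_rat_Aint ?inK_real_Crat. Qed.

Lemma inK0 : inK d 0.
Proof. by exists 0, 0; rewrite rmorph0 mul0r addr0. Qed.

Lemma inK1 : inK d 1.
Proof. by exists 1, 0; rewrite rmorph1 rmorph0 mul0r addr0. Qed.

Lemma inK_mul x y : inK d x -> inK d y -> inK d (x * y).
Proof.
move=> [a [b ->]] [a' [b' ->]].
exists (a * a' - d%:R * b * b'), (a * b' + b * a').
rewrite !(rmorphD, rmorphN, rmorphM) /= rmorph_nat.
have -> : (d%:R : algC) = - s ^+ 2 by rewrite sqrt_negd_sqr opprK.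
ring.
Qed.

Lemma inOK_sqr x : inOK d x -> inOK d (x ^+ 2).
Proof. by case=> Kx Ax; split; [exact: inK_mul | rewrite rpredX]. Qed.

Hypothesis d_mod8 : (d %% 8 = 7)%N.

Lemma inK_sum4sqr_eq0 x0 x1 x2 x3 : inK d x0 -> inK d x1 -> inK d x2 -> inK d x3 ->
  x0 ^+ 2 + x1 ^+ 2 + x2 ^+ 2 + x3 ^+ 2 = 0 -> [/\ x0 = 0, x1 = 0, x2 = 0 & x3 = 0].
Proof.
move=> [a0 [b0 ->]] [a1 [b1 ->]] [a2 [b2 ->]] [a3 [b3 ->]] E.
have /ratr_sqrt_negd_eq0[Eaa Eab] :
   ratr (a0 ^+ 2 + a1 ^+ 2 + a2 ^+ 2 + a3 ^+ 2 - d%:R * (b0 ^+ 2 + b1 ^+ 2 + b2 ^+ 2 + b3 ^+ 2))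
   + ratr (2 * (a0 * b0 + a1 * b1 + a2 * b2 + a3 * b3)) * s = 0.
  rewrite -E !(rmorphD, rmorphN, rmorphM, rmorphXn) /= !rmorph_nat.
  have -> : (d%:R : algC) = - s ^+ 2 by rewrite sqrt_negd_sqr opprK.
  ring.
move/eqP: Eab; rewrite mulf_eq0 pnatr_eq0 /= => /eqP Eab.
have [[-> -> -> ->] [-> -> -> ->]] := orthogonal_sum4sqrq_eq0 d_mod8 Eab (subr0_eq Eaa).
by rewrite rmorph0 mul0r addr0.
Qed.

End QuadraticField.

Lemma qmulA a b c : qmul (qmul a b) c = qmul a (qmul b c).
Proof. by case: a b c => ? ? ? ? [? ? ? ?] [? ? ? ?]; rewrite /qmul /=; congr Quat; ring. Qed.

Lemma qmul1q a : qmul qone a = a.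
Proof. by case: a => ? ? ? ?; rewrite /qmul /=; congr Quat; ring. Qed.

Lemma qmul_const a c : qmul a (qconst c) = qscale c a.
Proof. by case: a => ? ? ? ?; rewrite /qmul /qscale /=; congr Quat; ring. Qed.

Lemma qmul_scale a c b : qmul a (qscale c b) = qscale c (qmul a b).
Proof. by case: a b => ? ? ? ? [? ? ? ?]; rewrite /qmul /qscale /=; congr Quat; ring. Qed.

Lemma qscaleA c c' a : qscale c (qscale c' a) = qscale (c * c') a.
Proof. by case: a => ? ? ? ?; rewrite /qscale /=; congr Quat; ring. Qed.

Lemma qscale1 a : qscale 1 a = a.
Proof. by case: a => ? ? ? ?; rewrite /qscale /=; congr Quat; ring. Qed.

Lemma qmul_sqr u : qmul u u = qsub (qscale (2 * q1 u) u) (qconst (qnorm u)).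
Proof. by case: u => ? ? ? ?; rewrite /qmul /qsub /qadd /qscale /qnorm /=; congr Quat; ring. Qed.

Lemma qpow1 u : qpow u 1 = u.
Proof. exact: qmul1q. Qed.

Lemma qpowSS u n : qpow u n.+2 = qmul (qpow u n) (qmul u u).
Proof. by rewrite /= qmulA. Qed.

Lemma qpow_const c n : qpow (qconst c) n = qconst (c ^+ n).
Proof. by elim: n => [|n IH] //=; rewrite IH qmul_const /qscale /= exprSr !mulr0 mulrC. Qed.

Lemma qconst_inj : injective qconst.
Proof. by move=> c c' [->]. Qed.

Lemma qmul_eigen u l : l ^+ 2 - 2 * q1 u * l + qnorm u = 0 ->
  qmul u (qsub u (qconst (2 * q1 u - l))) = qscale l (qsub u (qconst (2 * q1 u - l))).
Proof.
case: u => a b c e; rewrite /qnorm /= => root_l.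
rewrite /qmul /qsub /qadd /qscale /=; congr Quat; try ring.
apply/eqP; rewrite -subr_eq0 -oppr_eq0; apply/eqP; rewrite -[RHS]root_l; ring.
Qed.

Lemma qpow_eigen u w l : qmul u w = qscale l w ->
  forall n, qmul (qpow u n) w = qscale (l ^+ n) w.
Proof.
move=> uw; elim=> [|n IH] /=; first by rewrite qmul1q qscale1.
by rewrite qmulA uw qmul_scale IH qscaleA exprSr mulrC.
Qed.

Lemma qscale_fixed c w : qscale c w = w -> c = 1 \/ w = qconst 0.
Proof.
case: w => a b c' e [ea eb ec ee].
have fixed x : c * x = x -> x != 0 -> c = 1.
  by move=> cx nz_x; apply: (mulIf nz_x); rewrite mul1r.
have [a0|/(fixed _ ea)] := eqVneq a 0; last by left.
have [b0|/(fixed _ eb)] := eqVneq b 0; last by left.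
have [c0|/(fixed _ ec)] := eqVneq c' 0; last by left.
have [e0|/(fixed _ ee)] := eqVneq e 0; last by left.
by right; rewrite a0 b0 c0 e0.
Qed.

Lemma qsub_eq0 a b : qsub a b = qconst 0 -> a = b.
Proof.
case: a b => ? ? ? ? [? ? ? ?]; rewrite /qsub /qadd /qscale /= !mulN1r.
by case=> /subr0_eq -> /subr0_eq -> /subr0_eq -> /subr0_eq ->.
Qed.

Lemma qpow_eigenvalue u l n : qpow u n = qone ->
  l ^+ 2 - 2 * q1 u * l + qnorm u = 0 -> l ^+ n = 1.
Proof.
move=> un1 root_l; have := qpow_eigen (qmul_eigen root_l) n.
rewrite un1 qmul1q => /esym/qscale_fixed[//|/qsub_eq0 u_const].
have l_eq : l = q1 u.
  have q1u : q1 u = 2 * q1 u - l by rewrite {1}u_const.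
  by apply: (addrI (q1 u)); rewrite {1}q1u; ring.
have u_l : u = qconst l by rewrite {1}u_const l_eq; congr qconst; ring.
by move: un1; rewrite u_l qpow_const => /qconst_inj.
Qed.

Lemma normr_unity_root (R : numDomainType) (x : R) n :
  (0 < n)%N -> x ^+ n = 1 -> `|x| = 1.
Proof.
move=> n_gt0 /(congr1 (fun y => `|y|)) /eqP.
by rewrite normrX normr1 pexprn_eq1 // eqn0Ngt n_gt0 => /eqP.
Qed.

Lemma torsion_eigenvalue u n : (0 < n)%N -> qpow u n = qone ->
  exists2 l : algC, `|l| = 1 & l ^+ 2 - 2 * q1 u * l + qnorm u = 0.
Proof.
move=> n_gt0 un1; set r := sqrtC (q1 u ^+ 2 - qnorm u).
have root_l : (q1 u + r) ^+ 2 - 2 * q1 u * (q1 u + r) + qnorm u = 0.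
  have r2 : r ^+ 2 = q1 u ^+ 2 - qnorm u := sqrtCK _.
  by rewrite -[RHS](subrr (r ^+ 2)) {2}r2; ring.
by exists (q1 u + r); first exact: normr_unity_root n_gt0 (qpow_eigenvalue un1 root_l).
Qed.

Lemma int_norm_le1 (R : archiNumDomainType) (x : R) :
  x \is a Num.int -> `|x| <= 1 -> x = -1 \/ x = 0 \/ x = 1.
Proof.
case/intrP => z ->; rewrite -intr_norm lerz1 ler_norml => /andP [z_ge z_le].
have : z = -1 \/ z = 0 \/ z = 1 by lia.
by case=> [->|[->|->]]; [left | right; left | right; right].
Qed.

Lemma eigen_trace (t c l : algC) : `|l| = 1 ->
  l ^+ 2 - 2 * t * l + c = 0 -> 2 * t = l + c * l^*.
Proof.
move=> l_norm root_l; have nz_l : l != 0 by rewrite -normr_eq0 l_norm oner_eq0.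
apply: (mulIf nz_l).
rewrite /= [RHS]mulrDl -[c * _ * l]mulrA -normCKC l_norm expr1n mulr1.
by rewrite -[RHS]subr0 -root_l; ring.
Qed.

Lemma eigen_trace_Re (t l : algC) : `|l| = 1 -> l ^+ 2 - 2 * t * l + 1 = 0 -> t = 'Re l.
Proof.
move=> l_norm /(eigen_trace l_norm); rewrite mul1r ReE => <-.
by rewrite [2 * t]mulrC mulfK ?pnatr_eq0.
Qed.

Lemma eigen_trace_Im (t l : algC) : `|l| = 1 -> l ^+ 2 - 2 * t * l + -1 = 0 ->
  t = 'i * 'Im l.
Proof.
move=> l_norm /(eigen_trace l_norm) two_t.
have nz_2 : 2 != 0 :> algC by rewrite pnatr_eq0.
apply: (mulfI nz_2); rewrite two_t ImE.
have -> : 'i * ('i * (l^* - l) / 2) = 'i ^+ 2 * (l^* - l) / 2 :> algC by ring.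
by rewrite sqrCi; field.
Qed.

Lemma oppr1_neq1 (R : numDomainType) : (-1 : R) != 1.
Proof. by rewrite lt_eqF // (lt_trans (ltrN10 R) ltr01). Qed.

Lemma has_order_torsion u n : has_order u n -> torsion u.
Proof. by case=> n_gt0 [un1 _]; exists n. Qed.

Lemma has_order_qone : has_order qone 1.
Proof. by split=> //; split=> [|[|m]] //; exact: qpow1. Qed.

Lemma has_order_qconstN1 : has_order (qconst (-1)) 2.
Proof.
split=> //; split=> [|[|[|m]]] //; first by rewrite qpow_const sqrrN expr1n.
by rewrite qpow1 => _ _ /qconst_inj/eqP; rewrite (negbTE (oppr1_neq1 _)).
Qed.

Lemma has_order_pure u : q1 u = 0 -> qnorm u = 1 -> has_order u 4.
Proof.
move=> t0 N1; have u2 : qmul u u = qconst (-1).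
  rewrite qmul_sqr t0 N1; case: u t0 {N1} => ? ? ? ? /= ->.
  by rewrite /qsub /qadd /qscale /=; congr Quat; ring.
have uSS n : qpow u n.+2 = qscale (-1) (qpow u n) by rewrite qpowSS u2 qmul_const.
split=> //; split=> [|[|[|[|[|m]]]]] //.
- by rewrite uSS uSS qscaleA mulrNN mulr1 qscale1.
- by rewrite qpow1 => _ _ /(congr1 q1); rewrite t0 => /esym/eqP; rewrite oner_eq0.
- by rewrite uSS => _ _ /(congr1 q1)/eqP; rewrite /= mulr1 (negbTE (oppr1_neq1 _)).
- by rewrite uSS qpow1 => _ _ /(congr1 q1) /=; rewrite t0 mulr0 => /esym/eqP; rewrite oner_eq0.
Qed.

Section UnitsOverK.
Variables (d : nat) (d_gt0 : (0 < d)%N) (d_mod8 : (d %% 8 = 7)%N).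

Lemma norm1_torsion_trace u : inOK d (q1 u) -> qnorm u = 1 -> torsion u ->
  q1 u = -1 \/ q1 u = 0 \/ q1 u = 1.
Proof.
move=> OKt N1 [n [n_gt0 un1]]; have [l l_norm] := torsion_eigenvalue n_gt0 un1.
rewrite N1 => /(eigen_trace_Re l_norm) t_Re.
apply: int_norm_le1; first by rewrite (inOK_real_int d_gt0 OKt) // t_Re Creal_Re.
by rewrite t_Re -l_norm (leif_normC_Re_Creal l).1.
Qed.

Lemma norm1_trace_sqr1 u : inHOK d u -> qnorm u = 1 -> q1 u ^+ 2 = 1 -> u = qconst (q1 u).
Proof.
move=> [_ [[Ki _] [[Kj _] [Kk _]]]] N1 t2.
have : qi u ^+ 2 + qj u ^+ 2 + qk u ^+ 2 + 0 ^+ 2 = 0.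
  transitivity (qnorm u - q1 u ^+ 2); first by rewrite /qnorm; ring.
  by rewrite N1 t2 subrr.
case/(inK_sum4sqr_eq0 d_gt0 d_mod8 Ki Kj Kk (inK0 d)).
by case: u {Ki Kj Kk N1 t2} => /= ? ? ? ? -> -> -> _.
Qed.

Lemma norm1_trace_has_order u : inHOK d u -> qnorm u = 1 ->
  q1 u = -1 \/ q1 u = 0 \/ q1 u = 1 -> has_order u 1 \/ has_order u 2 \/ has_order u 4.
Proof.
move=> Hu N1 [t|[t|t]].
- right; left; rewrite (norm1_trace_sqr1 Hu N1) t ?sqrrN ?expr1n //.
  exact: has_order_qconstN1.
- by right; right; apply: has_order_pure.
- by left; rewrite (norm1_trace_sqr1 Hu N1) t ?expr1n //; apply: has_order_qone.
Qed.

Lemma normN1_torsion_trace_sqr u : inOK d (q1 u) -> qnorm u = -1 -> torsion u ->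
  q1 u ^+ 2 = -1 \/ q1 u ^+ 2 = 0.
Proof.
move=> OKt N1 [n [n_gt0 un1]]; have [l l_norm] := torsion_eigenvalue n_gt0 un1.
rewrite N1 => /(eigen_trace_Im l_norm) t_Im.
have t2 : q1 u ^+ 2 = - 'Im l ^+ 2 by rewrite t_Im exprMn sqrCi mulN1r.
have Re2_ge0 : 0 <= 'Re l ^+ 2 by rewrite -real_normK ?Creal_Re // exprn_ge0.
have Im2_ge0 : 0 <= 'Im l ^+ 2 by rewrite -real_normK ?Creal_Im // exprn_ge0.
have : `|q1 u ^+ 2| <= 1.
  by rewrite t2 normrN ger0_norm // -(expr1n _ 2) -l_norm normC2_Re_Im lerDr.
case/int_norm_le1=> [||[]]; try by [left | right].
  by rewrite (inOK_real_int d_gt0 (inOK_sqr OKt)) // t2 rpredN rpredX // Creal_Im.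
by rewrite t2 => /eqP; rewrite eqr_oppLR => /eqP Im2; move: Im2_ge0; rewrite Im2 ler0N1.
Qed.

Lemma inK_sqr_neqN1 x : inK d x -> x ^+ 2 != -1.
Proof.
move=> Kx; apply/eqP => x2.
have : x ^+ 2 + 1 ^+ 2 + 0 ^+ 2 + 0 ^+ 2 = 0 by rewrite x2; ring.
case/(inK_sum4sqr_eq0 d_gt0 d_mod8 Kx (inK1 d) (inK0 d) (inK0 d)) => _ /eqP.
by rewrite oner_eq0.
Qed.

Lemma normN1_trace_neq0 u : inHOK d u -> qnorm u = -1 -> q1 u != 0.
Proof.
move=> [_ [[Ki _] [[Kj _] [Kk _]]]] N1; apply/eqP => t0.
have : qi u ^+ 2 + qj u ^+ 2 + qk u ^+ 2 + 1 ^+ 2 = 0.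
  transitivity (qnorm u - q1 u ^+ 2 + 1); first by rewrite /qnorm; ring.
  by rewrite N1 t0 expr0n subr0 addNr.
by case/(inK_sum4sqr_eq0 d_gt0 d_mod8 Ki Kj Kk (inK1 d)) => _ _ _ /eqP; rewrite oner_eq0.
Qed.

Lemma normN1_infinite_order u : inHOK d u -> qnorm u = -1 -> infinite_order u.
Proof.
move=> Hu N1 n n_gt0 un1.
have [] := normN1_torsion_trace_sqr Hu.1 N1 (ex_intro _ n (conj n_gt0 un1)); apply/eqP.
- by case: Hu => -[Kt _] _; apply: inK_sqr_neqN1.
- by rewrite sqrf_eq0 normN1_trace_neq0.
Qed.

End UnitsOverK.

Theorem mainTheorem14 (d : nat) (u : quat) :
  (0 < d)%N -> squarefree_nat d -> (d %% 8 = 7)%N ->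
  unitHOK d u ->
  [/\ qmul u u = qsub (qscale (2 * q1 u) u) (qconst (qnorm u)),
      qnorm u = 1 ->
        (torsion u <-> (q1 u = -1 \/ q1 u = 0 \/ q1 u = 1)) /\
        (torsion u -> has_order u 1 \/ has_order u 2 \/ has_order u 4)
    & qnorm u = -1 -> infinite_order u].
Proof.
move=> d_gt0 _ d_mod8 [Hu _]; split; first exact: qmul_sqr.
- move=> N1; have trace := norm1_torsion_trace d_gt0 Hu.1 N1.
  have order := norm1_trace_has_order d_gt0 d_mod8 Hu N1.
  split; last by move/trace/order.
  by split=> [/trace | /order [|[]] /has_order_torsion].
- exact: (@normN1_infinite_order d d_gt0 d_mod8 u Hu).
Qed.
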